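(* Let $A$ be a finite set, $n\in\mathbb N$, $\mu\in\Pr(A^n)$ and $r>0$. Then there exists $S\subseteq[n]$ with $|S|\ge(1-r)n$ such that $\mathrm{DTC}(\mu_S)\le r^{-1}\mathrm{TC}(\mu)$.
   Context: $[n]=\{1,\dots,n\}$; $\mu_S$ is the projection (marginal) of $\mu$ on $A^S$. For a tuple $\xi=(\xi_i)_{i\in I}$ of random variables with joint law $\nu$, $\mathrm{TC}(\nu)=\sum_{i\in I}\mathrm H(\xi_i)-\mathrm H(\xi)$ (total correlation) and $\mathrm{DTC}(\nu)=\mathrm H(\xi)-\sum_{i\in I}\mathrm H(\xi_i\,|\,\xi_{I\setminus\{i\}})$ (dual total correlation), with Shannon entropy. *)

From mathcomp Require Import all_boot all_order all_algebra.
From mathcomp Require Import reals exp.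
Set Implicit Arguments. Unset Strict Implicit. Unset Printing Implicit Defensive.
Import Order.TTheory GRing.Theory Num.Theory.
Local Open Scope ring_scope.

Section Info.
Variable R : realType.

Definition is_pmf (T : finType) (p : T -> R) : Prop :=
  (forall t, 0 <= p t) /\ \sum_(t : T) p t = 1.

Definition pushforward (T U : finType) (p : T -> R) (f : T -> U) : U -> R :=
  fun u => \sum_(t : T | f t == u) p t.

(* Shannon entropy (natural logarithm; ln 0 = 0 so 0 ln 0 = 0) *)
Definition entropy (T : finType) (p : T -> R) : R :=
  - \sum_(t : T) p t * ln (p t).

Definition cond_entropy (T U V : finType) (p : T -> R) (X : T -> U) (Y : T -> V) : R :=
  let pXY := pushforward p (fun t => (X t, Y t)) in
  let pY := pushforward p Y in
  - \sum_(u : U) \sum_(v : V) pXY (u, v) * ln (pXY (u, v) / pY v).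

Definition restr (I A : finType) (P : pred I) (x : {ffun I -> A})
  : {ffun {j : I | P j} -> A} := [ffun j => x (val j)].

Definition coord (I A : finType) (i : I) (x : {ffun I -> A}) : A := x i.

Definition TC (I A : finType) (nu : {ffun I -> A} -> R) : R :=
  \sum_(i : I) entropy (pushforward nu (coord i)) - entropy nu.

Definition DTC (I A : finType) (nu : {ffun I -> A} -> R) : R :=
  entropy nu
  - \sum_(i : I) cond_entropy nu (coord i) (restr (fun j => j != i)).

Definition marginal (n : nat) (A : finType) (mu : {ffun 'I_n -> A} -> R)
  (S : {set 'I_n}) : {ffun {j : 'I_n | j \in S} -> A} -> R :=
  pushforward mu (restr (fun j => j \in S)).

End Info.
Arguments marginal {R n A} mu S.

From Pilot Require Import Defs.
From mathcomp Require Import all_boot all_order all_algebra.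
From mathcomp Require Import reals exp.
From mathcomp Require Import ring lra.
Set Implicit Arguments. Unset Strict Implicit. Unset Printing Implicit Defensive.
Import Order.TTheory GRing.Theory Num.Theory.
Local Open Scope ring_scope.

(* The set function h(S) = H(xi_S) is submodular with
   h(emptyset) = 0.  For such h, DTC(mu_S) <= |S| * max_{i in S} I(xi_i; xi_{S\i}),
   and deleting a coordinate j attaining the maximum lowers TC(mu_S) by exactly
   I(xi_j; xi_{S\j}).  Greedily deleting d = floor(r n) coordinates, the deleted
   mutual informations add up to at most TC(mu), so at some stage before the
   end the current maximum is at most TC(mu) / (d + 1) < TC(mu) / (r n), and
   then DTC(mu_S) <= n TC(mu) / (r n). *)

Section EntropyOfRandomVariables.
Variable R : realType.
Implicit Types T U V W : finType.

Lemma ln_le_subr1 (x : R) : 0 < x -> ln x <= x - 1.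
Proof.
by move=> x_gt0; have := @le_ln1Dx R (x - 1); rewrite (addrC 1) subrK; apply; lra.
Qed.

Definition entropy_rv T U (p : T -> R) (X : T -> U) : R :=
  - \sum_t p t * ln (pushforward p X (X t)).

Lemma sum_pushforward T U (p : T -> R) (X : T -> U) (G : U -> R) :
  \sum_u pushforward p X u * G u = \sum_t p t * G (X t).
Proof.
rewrite /pushforward; under eq_bigr do rewrite mulr_suml big_mkcond.
rewrite exchange_big /=; apply: eq_bigr => t _.
by rewrite -big_mkcond (big_pred1 (X t)) // => u; rewrite /= eq_sym.
Qed.

Lemma sum_pushforward_pred T U (p : T -> R) (X : T -> U) (P : pred U) :
  \sum_(u | P u) pushforward p X u = \sum_(t | P (X t)) p t.
Proof.
rewrite [RHS](partition_big X P) //; apply: eq_bigr => u Pu.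
by apply: eq_bigl => t; rewrite andb_idl // => /eqP ->.
Qed.

Lemma entropy_pushforward T U (p : T -> R) (X : T -> U) :
  entropy (pushforward p X) = entropy_rv p X.
Proof. by rewrite /entropy /entropy_rv sum_pushforward. Qed.

Lemma entropy_rv_id T (p : T -> R) : entropy_rv p id = entropy p.
Proof.
by congr (- _); apply: eq_bigr => t _; rewrite /pushforward big_pred1_eq.
Qed.

Lemma eq_entropy_rv T U V (p : T -> R) (X : T -> U) (Y : T -> V) :
  (forall t t', (X t == X t') = (Y t == Y t')) -> entropy_rv p X = entropy_rv p Y.
Proof.
move=> eqXY; congr (- _); apply: eq_bigr => t _.
by congr (_ * ln _); apply: eq_bigl => t'; rewrite eqXY.
Qed.

Lemma entropy_rv_comp T U V (p : T -> R) (X : T -> U) (f : U -> V) :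
  entropy_rv (pushforward p X) f = entropy_rv p (f \o X).
Proof.
congr (- _); rewrite (sum_pushforward p X (fun u => ln (pushforward _ f (f u)))).
apply: eq_bigr => t _; congr (_ * ln _).
exact: (sum_pushforward_pred p X (fun u => f u == f (X t))).
Qed.

Lemma pushforward_ge0 T U (p : T -> R) (X : T -> U) u :
  (forall t, 0 <= p t) -> 0 <= pushforward p X u.
Proof. by move=> p0; apply: sumr_ge0. Qed.

Lemma pushforward_gt0 T U (p : T -> R) (X : T -> U) t :
  (forall t, 0 <= p t) -> 0 < p t -> 0 < pushforward p X (X t).
Proof.
move=> p0 pt_gt0; rewrite /pushforward (bigD1 t) //=.
by rewrite ltr_pwDl // sumr_ge0.
Qed.

Lemma cond_entropyE T U V (p : T -> R) (X : T -> U) (Y : T -> V) :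
  (forall t, 0 <= p t) ->
  cond_entropy p X Y = entropy_rv p (fun t => (X t, Y t)) - entropy_rv p Y.
Proof.
move=> p0; rewrite /cond_entropy pair_bigA /=.
rewrite (eq_bigr (fun w => pushforward p (fun t => (X t, Y t)) w *
   ln (pushforward p (fun t => (X t, Y t)) w / pushforward p Y w.2))); last by case.
rewrite sum_pushforward /entropy_rv opprK addrC -sumrB -sumrN.
apply: eq_bigr => t _.
have [->|pt_gt0] := eqVneq (p t) 0; first by rewrite !mul0r subr0 oppr0.
have {}pt_gt0 : 0 < p t by rewrite lt_def pt_gt0 p0.
by rewrite ln_div ?posrE ?(pushforward_gt0 _ p0) // mulrBr opprB.
Qed.

Lemma gibbs T (p G : T -> R) :
  is_pmf p -> (forall t, 0 < p t -> 0 < G t) -> \sum_t p t * G t <= 1 ->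
  \sum_t p t * ln (G t) <= 0.
Proof.
move=> [p0 p1] G_gt0 pG_le1.
suff : \sum_t p t * ln (G t) <= \sum_t p t * G t - \sum_t p t by rewrite p1; lra.
rewrite -sumrB; apply: ler_sum => t _.
have [->|pt_gt0] := eqVneq (p t) 0; first by rewrite !mul0r subr0.
have {}pt_gt0 : 0 < p t by rewrite lt_def pt_gt0 p0.
by rewrite -[X in _ - X]mulr1 -mulrBr ler_wpM2l ?p0 ?ln_le_subr1 ?G_gt0.
Qed.

Section Submodularity.
Variables (T U V W : finType) (p : T -> R) (X : T -> U) (Y : T -> V).
Variables (f : U -> W) (g : V -> W).
Hypothesis p_pmf : is_pmf p.
Hypothesis fXgY : forall t, f (X t) = g (Y t).

Let pX := pushforward p X.
Let pY := pushforward p Y.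
Let pXY := pushforward p (fun t => (X t, Y t)).
Let pZ := pushforward p (f \o X).

(* The summand is the density, relative to [p], of the coupling of [X] and [Y]
   that makes them conditionally independent given [f X]; its mass is <= 1. *)
Lemma sum_cond_indep_coupling_le1 :
  \sum_t p t * (pX (X t) * pY (Y t) / (pXY (X t, Y t) * pZ (f (X t)))) <= 1.
Proof.
have [p0 p1] := p_pmf.
pose G w := pX w.1 * pY w.2 / (pXY w * pZ (f w.1)).
rewrite -(sum_pushforward p (fun t => (X t, Y t)) G) -/pXY.
apply: (@le_trans _ _ (\sum_u \sum_v pX u * pY v / pZ (f u) * (f u == g v)%:R)).
  rewrite pair_bigA; apply: ler_sum => -[u v] _ /=.
  have [pXY0|pXY_neq0] := eqVneq (pXY (u, v)) 0.
    by rewrite pXY0 mul0r mulr_ge0 ?divr_ge0 ?mulr_ge0 ?pushforward_ge0.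
  have fg : f u = g v.
    apply/eqP; apply: contra_neqT pXY_neq0 => fg; apply: big1 => t /eqP [Xt Yt].
    by move: fg; rewrite -Xt -Yt fXgY eqxx.
  by rewrite /G fg eqxx mulr1 invfM /= mulrCA !mulrA mulfK.
have sum_pX : \sum_u pX u = 1 by rewrite -p1; exact: sum_pushforward_pred p X predT.
rewrite -[X in _ <= X]sum_pX; apply: ler_sum => u _.
rewrite (eq_bigr (fun v => pX u / pZ (f u) * (pY v * (f u == g v)%:R))); last first.
  by move=> v _; ring.
rewrite -mulr_sumr.
have -> : \sum_v pY v * (f u == g v)%:R = pZ (f u).
  under eq_bigr do rewrite mulr_natr mulrb.
  rewrite -big_mkcond /= sum_pushforward_pred.
  by apply: eq_bigl => t; rewrite /= fXgY eq_sym.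
have [->|pZ_neq0] := eqVneq (pZ (f u)) 0; first by rewrite mulr0 pushforward_ge0.
by rewrite divfK.
Qed.

Lemma entropy_rv_submod :
  entropy_rv p (fun t => (X t, Y t)) + entropy_rv p (f \o X) <=
  entropy_rv p X + entropy_rv p Y.
Proof.
have [p0 _] := p_pmf.
pose G t := pX (X t) * pY (Y t) / (pXY (X t, Y t) * pZ (f (X t))).
have G_gt0 t : 0 < p t -> 0 < G t.
  by move=> pt_gt0; rewrite divr_gt0 ?mulr_gt0 ?(pushforward_gt0 _ p0).
have lnGE : \sum_t p t * ln (G t) =
    \sum_t p t * ln (pX (X t)) + \sum_t p t * ln (pY (Y t))
    - \sum_t p t * ln (pXY (X t, Y t)) - \sum_t p t * ln (pZ (f (X t))).
  rewrite -big_split -!sumrB /=; apply: eq_bigr => t _.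
  have [->|pt_neq0] := eqVneq (p t) 0; first by rewrite !mul0r !subr0 addr0.
  have pt_gt0 : 0 < p t by rewrite lt_def pt_neq0 p0.
  rewrite ln_div ?lnM ?posrE ?mulr_gt0 ?(pushforward_gt0 _ p0) //; ring.
have := gibbs p_pmf G_gt0 sum_cond_indep_coupling_le1.
rewrite lnGE /entropy_rv -/pX -/pY -/pXY -/pZ /=; lra.
Qed.

End Submodularity.

End EntropyOfRandomVariables.

(* For h the entropy of sets of coordinates, [mi i S], [tc S] and [dtc S] are
   I(xi_i; xi_{S\i}), TC(mu_S) and DTC(mu_S). *)
Section SubmodularCorrelations.
Variables (R : realType) (I : finType) (h : {set I} -> R).
Hypothesis h_set0 : h set0 = 0.
Hypothesis h_submod : forall S T, h (S :|: T) + h (S :&: T) <= h S + h T.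
Implicit Types (S : {set I}) (i j : I).

Definition mi i S := h [set i] + h (S :\ i) - h S.
Definition tc S := \sum_(i in S) h [set i] - h S.
Definition dtc S := h S - \sum_(i in S) (h S - h (S :\ i)).

Lemma mi_ge0 i S : i \in S -> 0 <= mi i S.
Proof.
move=> iS; have := h_submod (S :\ i) [set i].
rewrite setUC setD1K // (_ : _ :&: _ = set0) ?h_set0 /mi; first lra.
by apply/setP => j; rewrite !inE; case: eqP; rewrite ?andbF.
Qed.

Lemma tcD1 j S : j \in S -> tc S = tc (S :\ j) + mi j S.
Proof.
move=> jS; rewrite /tc /mi (bigD1 j) //=.
rewrite (eq_bigl (mem (S :\ j))); first lra.
by move=> i; rewrite !inE andbC.
Qed.

Lemma tc_ge0 S : 0 <= tc S.
Proof.
elim: {S}_.+1 {-2}S (ltnSn #|S|) => // k IHk S.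
have [->|/set0Pn [j jS]] := eqVneq S set0; first by rewrite /tc big_set0 h_set0 subrr.
rewrite ltnS (cardsD1 j) jS => ltSk.
by rewrite (tcD1 jS) addr_ge0 ?mi_ge0 ?IHk.
Qed.

Lemma dtc_le_sum_mi S : dtc S <= \sum_(i in S) mi i S.
Proof.
have -> : \sum_(i in S) mi i S =
    \sum_(i in S) h [set i] - \sum_(i in S) (h S - h (S :\ i)).
  by rewrite -sumrB; apply: eq_bigr => i _; rewrite /mi; ring.
by have := tc_ge0 S; rewrite /tc /dtc; lra.
Qed.

Lemma dtc0 : dtc set0 = 0.
Proof. by rewrite /dtc big_set0 h_set0 subrr. Qed.

Lemma dtc_le_card_mi S :
  S != set0 -> exists2 j, j \in S & dtc S <= #|S|%:R * mi j S.
Proof.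
case/set0Pn => i0 i0S.
have [j jS mi_max] := @arg_maxP _ _ _ i0 (mem S) (mi^~ S) i0S.
exists j => //; apply: le_trans (dtc_le_sum_mi S) _.
by rewrite mulr_natl -sumr_const; apply: ler_sum.
Qed.

Lemma dtc_le_card_tc S : dtc S <= #|S|%:R * tc S.
Proof.
have [->|/dtc_le_card_mi [j jS dtcS]] := eqVneq S set0.
  by rewrite dtc0 cards0 mul0r.
apply: le_trans dtcS _; rewrite ler_wpM2l // (tcD1 jS) lerDr; exact: tc_ge0.
Qed.

(* Either the coordinate [j] of maximal [mi j S] is weak enough for [S]
   itself to work, or [mi j S > tc S / d.+2], and removing [j] lowers [tc]
   by that much, which pays for one more step of the recursion. *)
Lemma exists_large_subset_small_dtc d S :
  exists S', [/\ S' \subset S, (#|S| <= #|S'| + d)%N &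
                 d.+1%:R * dtc S' <= #|S|%:R * tc S].
Proof.
elim: d S => [|d IHd] S; first by exists S; rewrite addn0 mul1r dtc_le_card_tc.
have [->|/dtc_le_card_mi [j jS dtcS]] := eqVneq S set0.
  by exists set0; rewrite dtc0 cards0 mulr0 mul0r.
have [mi_small|mi_large] := lerP (d.+2%:R * mi j S) (tc S).
  exists S; split; rewrite ?leq_addr //.
  by apply: le_trans (ler_wpM2l _ dtcS) _; rewrite // mulrCA ler_wpM2l.
have [S' [S'S cardS' dtcS']] := IHd (S :\ j).
exists S'; split; first exact: subset_trans S'S (subsetDl S _).
  by rewrite (cardsD1 j S) jS addnS.
move: mi_large dtcS' (tc_ge0 (S :\ j)).
rewrite (tcD1 jS) (cardsD1 j S) jS add1n -[d.+2]addn1 -[#|_|.+1]addn1 !natrD.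
set e := d.+1%:R; set k := #|S :\ j|%:R; set T := tc _; set m := mi j S.
have e_gt0 : 0 < e by []; have k_ge0 : 0 <= k by [].
move=> mi_large dtcS' T_ge0; rewrite -(ler_pM2l e_gt0); nra.
Qed.

End SubmodularCorrelations.

Lemma restr_eqE (I A : finType) (P : pred I) (x y : {ffun I -> A}) :
  (restr P x == restr P y) = [forall j, P j ==> (x j == y j)].
Proof.
apply/eqP/forallP => [xy j | xy]; first apply/implyP => Pj.
  by move/ffunP: xy => /(_ (exist _ j Pj)); rewrite !ffunE => ->.
by apply/ffunP => k; rewrite !ffunE; apply/eqP; move: (xy (val k)); rewrite (valP k).
Qed.

Lemma coord_restr_eqE (I A : finType) (i : I) (x y : {ffun I -> A}) :
  ((Defs.coord i x, restr (fun k => k != i) x) ==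
   (Defs.coord i y, restr (fun k => k != i) y)) = (x == y).
Proof.
rewrite xpair_eqE restr_eqE; apply/andP/eqP => [[/eqP xyi /forallP xy]|-> //].
  apply/ffunP => k; have [->|ki] := eqVneq k i; first exact: xyi.
  by apply/eqP; move: (xy k); rewrite ki.
by split=> //; apply/forallP => k; rewrite eqxx implybT.
Qed.

Section CoordinateEntropy.
Variables (R : realType) (I A : finType) (mu : {ffun I -> A} -> R).
Hypothesis mu_pmf : is_pmf mu.
Implicit Types (S T : {set I}) (x y : {ffun I -> A}).

(* Unlike [restr S x], [proj S x] has a type independent of [S]. *)
Definition proj S x : {ffun I -> option A} :=
  [ffun j => if j \in S then Some (x j) else None].

Definition mask S (u : {ffun I -> option A}) : {ffun I -> option A} :=
  [ffun j => if j \in S then u j else None].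

Definition H S := entropy_rv mu (proj S).

Lemma proj_eqE S x y : (proj S x == proj S y) = [forall j in S, x j == y j].
Proof.
apply/eqP/forall_inP => [xy j jS | xy]; last first.
  by apply/ffunP => j; rewrite !ffunE; case: ifP => // /xy/eqP ->.
by move/ffunP: xy => /(_ j); rewrite !ffunE jS => -[->].
Qed.

Lemma mask_proj S T x : S \subset T -> mask S (proj T x) = proj S x.
Proof.
move/subsetP => ST; apply/ffunP => j; rewrite !ffunE.
by case: ifP => // /ST ->.
Qed.

Lemma entropy_rv_agree (U : finType) (X : {ffun I -> A} -> U) S :
  (forall x y, (X x == X y) = [forall j in S, x j == y j]) ->
  entropy_rv mu X = H S.
Proof. by move=> XS; apply: eq_entropy_rv => x y; rewrite XS proj_eqE. Qed.

Lemma H_set0 : H set0 = 0.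
Proof.
have [_ mu1] := mu_pmf.
rewrite /H /entropy_rv big1 ?oppr0 // => x _.
rewrite /pushforward (eq_bigl predT) ?mu1 ?ln1 ?mulr0 // => y.
by rewrite proj_eqE; apply/forall_inP => j; rewrite inE.
Qed.

Lemma H_submod S T : H (S :|: T) + H (S :&: T) <= H S + H T.
Proof.
have proj_ST x : mask (S :&: T) (proj S x) = mask (S :&: T) (proj T x).
  by rewrite !mask_proj ?subsetIl ?subsetIr.
have := entropy_rv_submod mu_pmf proj_ST.
rewrite (entropy_rv_agree (X := mask (S :&: T) \o proj S) (S := S :&: T)); last first.
  by move=> x y; rewrite /= !mask_proj ?subsetIl // proj_eqE.
rewrite (entropy_rv_agree (S := S :|: T)) //.
move=> x y; rewrite xpair_eqE !proj_eqE.
apply/andP/forall_inP => [[/forall_inP xyS /forall_inP xyT] j|xy].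
  by rewrite inE => /orP[/xyS|/xyT].
by split; apply/forall_inP => j jST; apply: xy; rewrite inE jST ?orbT.
Qed.

Lemma entropy_restr S : entropy (pushforward mu (restr (fun j => j \in S))) = H S.
Proof.
by rewrite entropy_pushforward; apply: entropy_rv_agree => x y; rewrite restr_eqE.
Qed.

Lemma cond_entropy_restr S (i : {j | j \in S}) :
  cond_entropy (pushforward mu (restr (fun j => j \in S)))
    (Defs.coord i) (restr (fun k => k != i)) = H S - H (S :\ val i).
Proof.
have [mu0 _] := mu_pmf.
rewrite cond_entropyE => [|w]; last exact: pushforward_ge0.
rewrite !entropy_rv_comp; congr (_ - _); apply: entropy_rv_agree => x y /=.
  by rewrite coord_restr_eqE restr_eqE.
rewrite !restr_eqE; apply/forallP/forall_inP => [xy j | xy k].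
  rewrite !inE => /andP[ji jS]; move: (xy (exist _ j jS)); rewrite !ffunE.
  by have -> : exist _ j jS != i by apply: contraNneq ji => <-.
apply/implyP => ki; rewrite !ffunE; apply: xy.
by rewrite !inE (valP k) andbT; apply: contra ki => /eqP/val_inj ->.
Qed.

Lemma DTC_restr S : DTC (pushforward mu (restr (fun j => j \in S))) = dtc H S.
Proof.
rewrite /DTC /dtc entropy_restr (big_sub S (fun j => H S - H (S :\ j))).
by congr (_ - _); apply: eq_bigr => i _; rewrite cond_entropy_restr.
Qed.

Lemma TC_tc : TC mu = tc H [set: I].
Proof.
rewrite /TC /tc -entropy_rv_id (entropy_rv_agree (S := [set: I])); last first.
  move=> x y; apply/eqP/forall_inP => [-> // | xy].
  by apply/ffunP => j; apply/eqP/xy; rewrite inE.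
congr (_ - _); apply: eq_big => [i | i _]; first by rewrite inE.
rewrite entropy_pushforward; apply: entropy_rv_agree => x y.
apply/eqP/forall_inP => [xyi j | xy]; last by apply/eqP/xy; rewrite inE.
by rewrite inE => /eqP ->; apply/eqP.
Qed.

End CoordinateEntropy.

Theorem lemma3p7 (R : realType) (A : finType) (n : nat)
  (mu : {ffun 'I_n -> A} -> R) (r : R) :
  is_pmf mu -> 0 < r ->
  exists S : {set 'I_n},
    (1 - r) * n%:R <= #|S|%:R /\
    DTC (marginal mu S) <= r^-1 * TC mu.
Proof.
move=> mu_pmf r_gt0.
have /andP[d_le d_gt] := truncn_itv (mulr_ge0 (ltW r_gt0) (ler0n R n)).
have [S [_ cardS dtcS]] := exists_large_subset_small_dtc
  (H_set0 mu_pmf) (H_submod mu_pmf) (Num.truncn (r * n%:R)) [set: 'I_n].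
have T_ge0 := tc_ge0 (H_set0 mu_pmf) (H_submod mu_pmf) [set: 'I_n].
exists S; rewrite /marginal (DTC_restr mu_pmf) TC_tc ler_pdivlMl //.
move: cardS dtcS T_ge0; rewrite cardsT card_ord -(ler_nat R) natrD.
move: (dtc _ S) (tc _ _) => D T cardS dtcS T_ge0.
have n_ge0 : 0 <= n%:R :> R by [].
split; first lra.
have [D_le0|D_gt0] := lerP D 0; nra.
Qed.
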